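(* Let $n,m\in\mathbb{N}$, $f,g:\mathbb{F}_2^n\to\mathbb{F}_2$, $\mathbf{y}\in\mathbb{F}_2^n$, and let $h(\mathbf{x})=\mathbf{x}\cdot\mathbf{y}$. Then: (i) when $A^{(m)3,3}_n(h,f,g)$ is executed, the probability of measuring the all-zero state $\ket{0^n}$ is $2^{-2n}|C^{(m)}_{f,g}(\mathbf{y})|^2$; (ii) when $A^{(m)2,3}_n(h,f,g)$ is executed, the probability of measuring the driving qubit in state $\ket{0}$ is $\frac12\left(1+\Re\left(2^{-n}\zeta_m^{-wt(\mathbf{y})}C^{(m)}_{f,g}(\mathbf{y})\right)\right)$.
   Context: $\zeta_m=e^{2\pi i/m}$, $\overline{\zeta_m}$ its conjugate; $wt$ is Hamming weight; $\mathbf{x}\cdot\mathbf{y}=\bigoplus_i x_iy_i$; $\mathbf{x}\odot\mathbf{y}=\sum_ix_iy_i$ in the integers. $m$-crosscorrelation: $C^{(m)}_{f,g}(\mathbf{y})=\sum_{\mathbf{x}}(-1)^{f(\mathbf{x})\oplus g(\mathbf{x}\oplus\mathbf{y})}(\zeta_m^2)^{\mathbf{x}\odot\mathbf{y}}$. Gates: $\mathrm{H}$ Hadamard; $\Omega_m=\frac{1}{\sqrt2}\begin{pmatrix}1&\zeta_m\\1&-\zeta_m\end{pmatrix}$; $\overline{\Omega}_m=\frac{1}{\sqrt2}\begin{pmatrix}1&\overline{\zeta_m}\\1&-\overline{\zeta_m}\end{pmatrix}$; $\mathrm{S}_m=\mathrm{diag}(1,\zeta_m)$; $U_f$ is the phase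 oracle $\ket{\mathbf{x}}\mapsto(-1)^{f(\mathbf{x})}\ket{\mathbf{x}}$. Algorithm $A^{(m)3,3}_n(f_1,f_2,f_3)$: from $\ket{0^n}$ apply in order $\mathrm{H}^{\otimes n}$, $U_{f_2}$, $\Omega_m^{\otimes n}$, $U_{f_1}$, $\mathrm{H}^{\otimes n}$, $U_{f_3}$, $\overline{\Omega}_m^{\otimes n}$, then measure all qubits. Algorithm $A^{(m)2,3}_n(f_1,f_2,f_3)$: driving qubit in $\ket{+}$, $n$-qubit register in $\ket{0^n}$; apply $\mathrm{H}^{\otimes n}$ to the register; controlled on driving qubit $\ket{0}$ apply $U_{f_2}$, $\Omega_m^{\otimes n}$, $U_{f_1}$, $\mathrm{H}^{\otimes n}$ in order; controlled on driving qubit $\ket{1}$ apply $\mathrm{S}_m^{\otimes n}$, $U_{f_3}$ in order; apply $\mathrm{H}$ to the driving qubit and measure it. *)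

From HB Require Import structures.
From mathcomp Require Import all_boot all_order all_algebra.
From mathcomp Require Import reals trigo.
From mathcomp Require Import complex.
Set Implicit Arguments. Unset Strict Implicit. Unset Printing Implicit Defensive.
Import Order.TTheory GRing.Theory Num.Theory.
Local Open Scope ring_scope.

Section Quantum.
Variable R : realType.
Local Notation C := R[i].

Definition bv (n : nat) := {ffun 'I_n -> bool}.
Definition bv0 (n : nat) : bv n := [ffun => false].

Definition dotF2 n (x y : bv n) : bool := \big[addb/false]_(i < n) (x i && y i).
Definition dotZ n (x y : bv n) : nat := \sum_(i < n) (x i && y i).
Definition wt n (y : bv n) : nat := \sum_(i < n) y i.

Definition sgnb (b : bool) : C := (-1) ^+ b.

Definition zeta (m : nat) : C := Complex (cos (2 * pi / m%:R)) (sin (2 * pi / m%:R)).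
Definition zetabar (m : nat) : C := conjc (zeta m).

Definition bvxor n (x y : bv n) : bv n := [ffun i => x i (+) y i].

Definition crosscorr (m n : nat) (f g : bv n -> bool) (y : bv n) : C :=
  \sum_(x : bv n) sgnb (f x (+) g (bvxor x y)) * (zeta m ^+ 2) ^+ dotZ x y.

(* a state of an n-qubit register: amplitude of each basis state |x> *)
Definition state n := bv n -> C.

(* a single-qubit gate as a 2x2 matrix: gate1 a b = <a| U |b> *)
Definition gate1 := bool -> bool -> C.

Definition invsqrt2 : C := ((Num.sqrt (2 : R))^-1)%:C%C.

Definition Hg : gate1 := fun a b => invsqrt2 * sgnb (a && b).
Definition Omega (m : nat) : gate1 :=
  fun a b => invsqrt2 * (if b then zeta m else 1) * sgnb (a && b).
Definition Omegabar (m : nat) : gate1 :=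
  fun a b => invsqrt2 * (if b then zetabar m else 1) * sgnb (a && b).
Definition Sg (m : nat) : gate1 :=
  fun a b => if a == b then (if a then zeta m else 1) else 0.

Definition tensor_all n (U : gate1) (psi : state n) : state n :=
  fun x => \sum_(z : bv n) (\prod_(i < n) U (x i) (z i)) * psi z.

Definition oracle n (f : bv n -> bool) (psi : state n) : state n :=
  fun x => sgnb (f x) * psi x.

Definition ket0 (n : nat) : state n := fun x => if x == bv0 n then 1 else 0.

Definition A33_state (m n : nat) (f1 f2 f3 : bv n -> bool) : state n :=
  tensor_all (Omegabar m) (oracle f3 (tensor_all Hg (oracle f1
    (tensor_all (Omega m) (oracle f2 (tensor_all Hg (@ket0 n))))))).

Definition prob_outcome n (psi : state n) (x : bv n) : R := Normc.normc (psi x) ^+ 2.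

(* states of driving qubit (first factor) + n-qubit register *)
Definition dstate n := bool -> state n.

Definition ctrl n (c : bool) (U : state n -> state n) (psi : dstate n) : dstate n :=
  fun b => if b == c then U (psi b) else psi b.

Definition on_reg n (U : state n -> state n) (psi : dstate n) : dstate n :=
  fun b => U (psi b).

Definition H_drive n (psi : dstate n) : dstate n :=
  fun b x => \sum_(c : bool) Hg b c * psi c x.

Definition init_drive (n : nat) : dstate n := fun b => (fun x => invsqrt2 * @ket0 n x).

Definition A23_state (m n : nat) (f1 f2 f3 : bv n -> bool) : dstate n :=
  H_drive
   (ctrl true (fun psi => oracle f3 (tensor_all (Sg m) psi))
     (ctrl false (fun psi => tensor_all Hg (oracle f1 (tensor_all (Omega m) (oracle f2 psi))))
       (on_reg (tensor_all Hg) (@init_drive n)))).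

Definition prob_drive n (psi : dstate n) (c : bool) : R :=
  \sum_(x : bv n) Normc.normc (psi c x) ^+ 2.

End Quantum.

From HB Require Import structures.
From mathcomp Require Import all_boot all_order all_algebra.
From mathcomp Require Import reals trigo.
From mathcomp Require Import complex.
From mathcomp Require Import ring.
From mathcomp Require Import boolp.
Set Implicit Arguments. Unset Strict Implicit. Unset Printing Implicit Defensive.
Import Order.TTheory GRing.Theory Num.Theory.
Local Open Scope ring_scope.

(* Write chi_y(x) = (-1)^(x.y).  By orthogonality of the characters chi_y, the
   Hadamard transform conjugates the phase oracle of x |-> x.y into the translation
   by y: H^n U_h H^n psi = psi(. + y).  Since Omega_m = H S_m gatewise, the common
   prefix H^n U_h Omega^n U_f H^n of both algorithms maps |0^n> to the state with
   amplitudes 2^(-n/2) zeta^wt(w+y) (-1)^f(w+y).  Both probabilities are then read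
   off the overlap
     sum_x zeta^wt(x+y) (-1)^f(x+y) conj(zeta^wt(x) (-1)^g(x)) = zeta^(-wt y) C_{f,g}(y),
   an identity which follows from wt x + wt y = 2 (x (.) y) + wt (x + y). *)

Section BitVectors.
Variable n : nat.
Implicit Types x y a b : bv n.

Lemma dotF2C x y : dotF2 x y = dotF2 y x.
Proof. by apply: eq_bigr => i _; rewrite andbC. Qed.

Lemma dotF2_xorr x a b : dotF2 x (bvxor a b) = dotF2 x a (+) dotF2 x b.
Proof. by rewrite /dotF2 -big_split; apply: eq_bigr => i _; rewrite ffunE andb_addr. Qed.

Lemma dotF2_0r x : dotF2 x (bv0 n) = false.
Proof. by rewrite /dotF2 big1 // => i _; rewrite ffunE andbF. Qed.

Lemma bvxorK y : involutive (@bvxor n ^~ y).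
Proof. by move=> x; apply/ffunP => i; rewrite !ffunE addbK. Qed.

Lemma wt_bvxor x y : (wt x + wt y = 2 * dotZ x y + wt (bvxor x y))%N.
Proof.
rewrite /wt /dotZ -big_split big_distrr -big_split /=.
by apply: eq_bigr => i _; rewrite ffunE; case: (x i); case: (y i).
Qed.

End BitVectors.

Section Characters.
Variables (R : realType) (n : nat).
Local Notation C := R[i].
Local Notation sgn := (sgnb R).
Implicit Types x y a b : bv n.

Lemma sgnb_dotF2 x y : sgn (dotF2 x y) = \prod_i sgn (x i && y i).
Proof. by rewrite /dotF2 (big_morph sgn (@signr_addb C) (erefl : sgn false = 1)). Qed.

Lemma expr_wt (c : C) y : c ^+ wt y = \prod_i (if y i then c else 1).
Proof.
rewrite /wt (big_morph _ (exprD c) (expr0 c)).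
by apply: eq_bigr => i _; case: (y i).
Qed.

Lemma prod_eq_if a b (F : 'I_n -> C) :
  \prod_i (if a i == b i then F i else 0) = if a == b then \prod_i F i else 0.
Proof.
have [->|neq_ab] := eqVneq a b; first by apply: eq_bigr => i _; rewrite eqxx.
have [i neq_i] : exists i, a i != b i.
  apply/existsP; rewrite -negb_forall; apply: contra neq_ab => /forallP eq_ab.
  by apply/eqP/ffunP => i; apply/eqP.
by rewrite (bigD1 i) //= (negbTE neq_i) mul0r.
Qed.

Lemma sum_sgnb_dotF2 a b :
  \sum_x sgn (dotF2 x a) * sgn (dotF2 x b) = if a == b then 2 ^+ n else 0.
Proof.
under eq_bigr do rewrite !sgnb_dotF2 -big_split.
rewrite -(bigA_distr_bigA (fun i (c : bool) => sgn (c && a i) * sgn (c && b i))).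
rewrite (eq_bigr (fun i => if a i == b i then 2 else 0)).
  by rewrite prod_eq_if prodr_const card_ord.
move=> i _; rewrite big_bool /sgnb /=.
by case: (a i); case: (b i); rewrite /= ?expr0 ?expr1 ?mulrNN ?mulr1 ?mul1r ?addNr.
Qed.

End Characters.

Section Gates.
Variables (R : realType) (n : nat).
Local Notation C := R[i].
Local Notation sgn := (sgnb R).
Local Notation s := (invsqrt2 R).
Implicit Types (psi : state R n) (x y : bv n).

Lemma invsqrt2_sqr : s * s = 2^-1.
Proof.
rewrite /invsqrt2 -rmorphM -invfM -expr2 sqr_sqrtr ?ler0n //.
by rewrite fmorphV rmorph_nat.
Qed.

Lemma invsqrt2_expn_sqr : s ^+ n * s ^+ n = 2^-n.
Proof. by rewrite -exprMn invsqrt2_sqr exprVn. Qed.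

Lemma zeta_mulJ m : zeta R m * conjc (zeta R m) = 1.
Proof.
apply/eqP; rewrite eq_complex /= mulrN opprK -!expr2 cos2Dsin2 eqxx /=.
by rewrite mulrN [X in _ + X]mulrC addNr.
Qed.

Lemma zeta_neq0 m : zeta R m != 0.
Proof.
by apply/eqP => z0; move: (zeta_mulJ m); rewrite z0 mul0r => /eqP; rewrite eq_sym oner_eq0.
Qed.

Lemma normc_zeta m : `|zeta R m| = 1.
Proof. by apply/eqP; rewrite -sqrp_eq1 // sqr_normc zeta_mulJ. Qed.

Lemma zetabarE m : zetabar R m = (zeta R m)^-1.
Proof. by apply: (mulfI (zeta_neq0 m)); rewrite divff ?zeta_neq0 // zeta_mulJ. Qed.

Lemma tensor_allZ (U : gate1 R) (c : C) psi :
  tensor_all U (fun x => c * psi x) = fun x => c * tensor_all U psi x.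
Proof.
apply: funext => x.
by rewrite /tensor_all mulr_sumr; apply: eq_bigr => z _; rewrite mulrCA.
Qed.

Lemma tensor_all_phase (U : gate1 R) (c : C) :
    (forall a b, U a b = s * (if b then c else 1) * sgn (a && b)) ->
  forall psi, tensor_all U psi =
    fun x => s ^+ n * \sum_z c ^+ wt z * sgn (dotF2 x z) * psi z.
Proof.
move=> UE psi; apply: funext => x.
rewrite /tensor_all mulr_sumr; apply: eq_bigr => z _.
rewrite (eq_bigr _ (fun i _ => UE (x i) (z i))) !big_split /= prodr_const card_ord.
by rewrite -expr_wt -sgnb_dotF2 !mulrA.
Qed.

Lemma tensor_all_Hg psi :
  tensor_all (Hg R) psi = fun x => s ^+ n * \sum_z sgn (dotF2 x z) * psi z.
Proof.
rewrite (@tensor_all_phase _ 1) => [|a b]; last by rewrite if_same mulr1.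
apply: funext => x /=.
by under eq_bigr do rewrite expr1n mul1r.
Qed.

Lemma tensor_all_Hg_ket0 : tensor_all (Hg R) (@ket0 R n) = fun=> s ^+ n.
Proof.
rewrite tensor_all_Hg; apply: funext => x.
rewrite (bigD1 (bv0 n)) //= big1 => [|z /negbTE nz]; last by rewrite /ket0 nz mulr0.
by rewrite /ket0 eqxx dotF2_0r mulr1 addr0 /sgnb expr0 mulr1.
Qed.

Lemma tensor_all_Sg m psi :
  tensor_all (Sg R m) psi = fun x => zeta R m ^+ wt x * psi x.
Proof.
apply: funext => x.
have prod_Sg (z : bv n) :
    \prod_i Sg R m (x i) (z i) = if x == z then zeta R m ^+ wt x else 0.
  by rewrite /Sg prod_eq_if -expr_wt.
rewrite /tensor_all (bigD1 x) //= prod_Sg eqxx big1 ?addr0 // => z /negbTE nzx.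
by rewrite prod_Sg eq_sym nzx mul0r.
Qed.

Lemma tensor_all_Omega m psi :
  tensor_all (Omega R m) psi = tensor_all (Hg R) (tensor_all (Sg R m) psi).
Proof.
rewrite (@tensor_all_phase _ (zeta R m)) // tensor_all_Hg tensor_all_Sg.
by apply: funext => x /=; under eq_bigr do rewrite -mulrA mulrCA.
Qed.

Lemma tensor_all_Hg_oracle_dotF2 y psi :
  tensor_all (Hg R) (oracle (fun x => dotF2 x y) (tensor_all (Hg R) psi)) =
  fun w => psi (bvxor w y).
Proof.
rewrite !tensor_all_Hg /oracle; apply: funext => w /=.
transitivity (s ^+ n * s ^+ n *
    \sum_v psi v * \sum_u sgn (dotF2 u (bvxor w y)) * sgn (dotF2 u v)).
  rewrite -mulrA; congr (_ * _).
  transitivity (\sum_u \sum_v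
      s ^+ n * psi v * (sgn (dotF2 u (bvxor w y)) * sgn (dotF2 u v))).
    apply: eq_bigr => u _; rewrite !mulr_sumr; apply: eq_bigr => v _.
    by rewrite dotF2_xorr /sgnb signr_addb (dotF2C u w); ring.
  rewrite exchange_big mulr_sumr; apply: eq_bigr => v _.
  by rewrite !mulr_sumr; apply: eq_bigr => u _; rewrite -mulrA.
under eq_bigr do rewrite sum_sgnb_dotF2.
rewrite (bigD1 (bvxor w y)) //= eqxx big1 => [|v /negbTE nv]; last first.
  by rewrite eq_sym nv mulr0.
by rewrite addr0 invsqrt2_expn_sqr mulrCA mulVf ?mulr1 // expf_neq0 // pnatr_eq0.
Qed.

End Gates.

Section ComplexModulus.
Variable R : rcfType.
Implicit Types u v : R[i].

Lemma normc_sqrE u : (Normc.normc u ^+ 2)%:C%C = `|u| ^+ 2.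
Proof. exact: rmorphXn. Qed.

Lemma mulcJ_add_unit u v : u * conjc u = 1 -> v * conjc v = 1 ->
  (u + v) * conjc (u + v) = 2 + (u * conjc v + conjc (u * conjc v)).
Proof.
move=> uJ vJ; rewrite rmorphD rmorphM /= conjcK.
transitivity (u * conjc u + v * conjc v + (u * conjc v + conjc u * v)); first by ring.
by rewrite uJ vJ mulrC.
Qed.

End ComplexModulus.

Section Phases.
Variables (R : realType) (m n : nat).
Local Notation C := R[i].
Local Notation zeta := (zeta R m).

Definition phase (f : bv n -> bool) (x : bv n) : C := zeta ^+ wt x * sgnb R (f x).

Lemma phase_conj f x : conjc (phase f x) = zetabar R m ^+ wt x * sgnb R (f x).
Proof. by rewrite rmorphM rmorphXn /sgnb rmorph_sign. Qed.

Lemma phase_mulJ f x : phase f x * conjc (phase f x) = 1.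
Proof.
by rewrite phase_conj mulrACA -exprMn zeta_mulJ expr1n mul1r -expr2 sqrr_sign.
Qed.

Lemma sum_phase_mulJ f g y :
  \sum_x phase f (bvxor x y) * conjc (phase g x) = zeta ^- wt y * crosscorr R m f g y.
Proof.
rewrite (reindex_inj (inv_inj (bvxorK y))) /= /crosscorr mulr_sumr.
apply: eq_bigr => x _; rewrite bvxorK phase_conj zetabarE /phase /sgnb signr_addb.
have zetak_neq0 k : zeta ^+ k != 0 by rewrite expf_neq0 ?zeta_neq0.
have wtE : zeta ^+ wt x = zeta ^+ (2 * dotZ x y) * zeta ^+ wt (bvxor x y) / zeta ^+ wt y.
  by rewrite -exprD -wt_bvxor exprD mulfK.
by rewrite exprVn -exprM wtE; field; rewrite !zetak_neq0.
Qed.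

End Phases.

Section Algorithms.
Variables (R : realType) (n m : nat) (f g : bv n -> bool) (y : bv n).
Local Notation C := R[i].
Local Notation s := (invsqrt2 R).
Local Notation h := (fun x : bv n => dotF2 x y).
Local Notation phase := (phase R m).

Lemma tensor_all_Hg_oracle_Omega (c : C) :
  tensor_all (Hg R) (oracle h (tensor_all (Omega R m) (oracle f (fun=> c)))) =
  fun w => c * phase f (bvxor w y).
Proof.
rewrite tensor_all_Omega tensor_all_Hg_oracle_dotF2 tensor_all_Sg /oracle.
by apply: funext => w; rewrite mulrA mulrC.
Qed.

Lemma A33_state_bv0 :
  A33_state R m h f g (bv0 n) = 2 ^- n * (zeta R m ^- wt y * crosscorr R m f g y).
Proof.
rewrite /A33_state tensor_all_Hg_ket0 tensor_all_Hg_oracle_Omega.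
rewrite (tensor_all_phase (c := zetabar R m)) //= -sum_phase_mulJ -invsqrt2_expn_sqr.
rewrite -[in RHS]mulrA; congr (_ * _); rewrite mulr_sumr; apply: eq_bigr => w _.
by rewrite /oracle dotF2C dotF2_0r phase_conj [sgnb R false]/sgnb expr0 mulr1; ring.
Qed.

Lemma A23_state_false x :
  A23_state R m h f g false x = s * s * s ^+ n * (phase f (bvxor x y) + phase g x).
Proof.
rewrite /A23_state /H_drive big_bool /ctrl /on_reg /init_drive /=.
rewrite tensor_allZ tensor_all_Hg_ket0 tensor_all_Hg_oracle_Omega tensor_all_Sg.
by rewrite /Hg /oracle /phase /sgnb /=; ring.
Qed.

Lemma prob_A33_bv0 : prob_outcome (A33_state R m h f g) (bv0 n) =
  2 ^- (2 * n) * Normc.normc (crosscorr R m f g y) ^+ 2.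
Proof.
apply: complexI; rewrite [RHS]rmorphM /= !normc_sqrE A33_state_bv0.
rewrite !normrM normfV normrX normr_nat normfV normrX normc_zeta expr1n invr1 mul1r.
by rewrite fmorphV rmorphXn rmorph_nat /= exprMn exprVn -exprM mulnC.
Qed.

Lemma prob_A23_false : prob_drive (A23_state R m h f g) false =
  2^-1 * (1 + complex.Re ((2 ^- n)%:C%C * zeta R m ^- wt y * crosscorr R m f g y)).
Proof.
rewrite -mulrA.
have tJ : s * s * s ^+ n * conjc (s * s * s ^+ n) = 2^-1 * 2^-1 * 2^-n.
  rewrite /invsqrt2 -rmorphXn -!rmorphM conjc_real !rmorphM rmorphXn.
  by rewrite mulrACA invsqrt2_sqr invsqrt2_expn_sqr.
apply: complexI; rewrite /prob_drive rmorph_sum /=.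
under eq_bigr do rewrite normc_sqrE sqr_normc A23_state_false rmorphM mulrACA tJ
  mulcJ_add_unit ?phase_mulJ //.
rewrite -mulr_sumr !big_split /= sumr_const -rmorph_sum sum_phase_mulJ.
rewrite card_ffun card_bool card_ord [RHS]rmorphM rmorphD rmorph1.
(* [rmorphM] leaves [real_complex] as a bundled morphism: refold it for [ReJ_add]. *)
rewrite -[X in 1 + X]/((complex.Re _)%:C%C) ReJ_add.
rewrite !fmorphV !rmorphXn !rmorph_nat.
move: (zeta R m ^- wt y * crosscorr R m f g y) => W.
rewrite rmorphM fmorphV rmorphXn rmorph_nat natrX.
by field; rewrite expf_neq0 // pnatr_eq0.
Qed.

End Algorithms.

Theorem theorem8 (R : realType) (n m : nat) (f g : bv n -> bool) (y : bv n) :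
  (0 < m)%N ->
  let h : bv n -> bool := fun x => dotF2 x y in
  prob_outcome (A33_state R m h f g) (bv0 n)
    = (2 : R) ^- (2 * n) * Normc.normc (crosscorr R m f g y) ^+ 2
  /\
  prob_drive (A23_state R m h f g) false
    = (2 : R)^-1 * (1 + complex.Re (((2 : R) ^- n)%:C%C * zeta R m ^- wt y * crosscorr R m f g y)).
Proof.
by move=> _ h; split; [exact: prob_A33_bv0 | exact: prob_A23_false].
Qed.
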